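(* Let $n>1$ be an integer and $\nu_n(x)=\sum_{d\mid n}\mu(d)\{x/d\}$. Then $$\sum_{a\in U_n}\nu_n(a)\,a=-\frac{n\phi(n)}{4}+n\sum_{d_1\mid n}\sum_{d_2\mid n}\mu(d_1)\mu(d_2)\,s\!\left(\frac{n}{d_1},\frac{n}{d_2}\right).$$
   Context: $U_n$ is the set of positive integers less than $n$ and coprime with $n$; $\{y\}$ is the fractional part; $\mu$ is the Möbius function, $\phi$ Euler's totient function. For positive integers $b,a$ (no coprimality assumed), $s(b,a)=\sum_{k=1}^{a}\left(\left(\frac{kb}{a}\right)\right)\left(\left(\frac{k}{a}\right)\right)$, where $((x))=\{x\}-\tfrac12$ if $x\notin\mathbb{Z}$ and $((x))=0$ if $x\in\mathbb{Z}$. *)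

From mathcomp Require Import all_boot all_order all_algebra.
Set Implicit Arguments. Unset Strict Implicit. Unset Printing Implicit Defensive.
Import Order.TTheory GRing.Theory Num.Theory.
Local Open Scope ring_scope.

(* Möbius function: 0 if n has a square factor (or n = 0), else (-1)^(number of primes). *)
Definition moebius (n : nat) : int :=
  if (0 < n)%N && all (fun p => logn p n == 1)%N (primes n)
  then (-1) ^+ size (primes n) else 0.

Definition frac (x : rat) : rat := x - (Num.floor x)%:~R.

Definition saw (x : rat) : rat :=
  if x \is a Num.int then 0 else frac x - 1 / 2.

Definition dedekind_sum (b a : nat) : rat :=
  \sum_(1 <= k < a.+1) saw ((k * b)%:R / a%:R) * saw (k%:R / a%:R).

Definition nu (n : nat) (x : rat) : rat :=
  \sum_(d <- divisors n) (moebius d)%:~R * frac (x / d%:R).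

Definition U (n : nat) : seq nat := [seq a <- iota 1 n.-1 | coprime a n].

From Pilot Require Import Defs.
From mathcomp Require Import all_boot all_order all_algebra.
From mathcomp Require Import zify ring lra.
Set Implicit Arguments. Unset Strict Implicit. Unset Printing Implicit Defensive.
Import Order.TTheory GRing.Theory Num.Theory.
Local Open Scope ring_scope.

(* For [m] coprime to [n > 1], [\sum_(d | n) mu(d) ((m/d))] equals [nu_n(m) + 1/2]:
   the term [d = 1] vanishes, no other divisor divides [m], and the nontrivial
   divisors carry total Moebius weight [-1].  Writing [s(n/d1, n/d2)] as the sum
   of [((m/d1)) ((m/n))] over the multiples [m] of [d2] in [[1, n]], the Moebius
   sum over [d2] keeps exactly the [m] coprime to [n], so the double sum equals
   [\sum_(m in U_n) (nu_n(m) + 1/2) (m/n - 1/2)].  Finally the symmetry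
   [nu_n(m) + nu_n(n - m) = -1] gives [\sum_(m in U_n) n nu_n(m) = \sum_(m in U_n) (m - n)],
   which turns this into the claimed identity. *)

Lemma moebius1 : moebius 1 = 1.
Proof. by []. Qed.

Lemma moebius_primeM p e : prime p -> ~~ (p %| e)%N -> (0 < e)%N ->
  moebius (p * e) = - moebius e.
Proof.
move=> pr_p npe e_gt0; have p_gt0 := prime_gt0 pr_p.
have primes_pe : perm_eq (primes (p * e)) (p :: primes e).
  apply: uniq_perm; first exact: primes_uniq.
    by rewrite /= primes_uniq andbT mem_primes; apply/negP => /and3P[_ _]; exact/negP.
  by move=> q; rewrite primesM // primes_prime // !inE.
rewrite /moebius muln_gt0 p_gt0 e_gt0 /= (perm_all _ primes_pe) (perm_size primes_pe) /=.
have -> : (logn p (p * e) == 1)%N.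
  by rewrite lognM // logn_prime // eqxx logn_coprime ?prime_coprime.
have -> : all (fun q => logn q (p * e) == 1)%N (primes e) =
          all (fun q => logn q e == 1)%N (primes e).
  apply: eq_in_all => q; rewrite mem_primes => /and3P[pr_q _ qe].
  rewrite logn_Gauss // prime_coprime // dvdn_prime2 //.
  by apply: contra npe => /eqP <-.
by case: (all _ (primes e)) => /=; rewrite ?oppr0 // exprS mulN1r.
Qed.

Lemma moebius_sqr_dvd p d : prime p -> (p ^ 2 %| d)%N -> moebius d = 0.
Proof.
move=> pr_p p2d; rewrite /moebius; case: (posnP d) => [->//|d_gt0].
case: ifP => // /andP[_ /allP squarefree_d].
have /squarefree_d/eqP logp_d : p \in primes d.
  by rewrite mem_primes pr_p d_gt0 (dvdn_trans _ p2d) // dvdn_exp.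
by move: p2d; rewrite (pfactor_dvdn 2 pr_p d_gt0) logp_d.
Qed.

Lemma sum_moebius_divisors g : (0 < g)%N ->
  \sum_(d <- divisors g) moebius d = (g == 1)%N%:Z.
Proof.
move=> g_gt0; case: (ltngtP g 1) => [|g_gt1|->]; first by rewrite ltnNge g_gt0.
  set p := pdiv g; have pr_p : prime p := pdiv_prime g_gt1.
  have p_gt0 := prime_gt0 pr_p; have p_dvd_g : (p %| g)%N := pdiv_dvd g.
  have gE : g = (p * (g %/ p))%N by rewrite mulnC divnK.
  have h_gt0 : (0 < g %/ p)%N by rewrite divn_gt0 // dvdn_leq.
  have inj_p : injective (muln p) by move=> x y /eqP; rewrite eqn_pmul2l // => /eqP.
  (* The divisors prime to [p] cancel against their multiples by [p]; the remaining
     multiples of [p^2] have Moebius value [0]. *)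
  rewrite (bigID (fun d => p %| d)%N) /=.
  have -> : \sum_(d <- divisors g | (p %| d)%N) moebius d =
            \sum_(e <- divisors (g %/ p)) moebius (p * e).
    rewrite -big_filter -(big_map (muln p) xpredT); apply: perm_big.
    apply: uniq_perm; rewrite ?filter_uniq ?map_inj_uniq ?divisors_uniq // => x.
    rewrite mem_filter -dvdn_divisors //; apply/idP/idP.
      case/andP => /dvdnP[y ->] xg; rewrite mulnC; apply: map_f.
      by rewrite -dvdn_divisors // -(dvdn_pmul2l p_gt0) -gE mulnC.
    case/mapP => y; rewrite -dvdn_divisors // => yh ->.
    by rewrite dvdn_mulr //= gE dvdn_pmul2l.
  have -> : \sum_(d <- divisors g | ~~ (p %| d)%N) moebius d =
            \sum_(e <- divisors (g %/ p) | ~~ (p %| e)%N) moebius e.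
    rewrite -big_filter -[RHS]big_filter; apply: perm_big.
    apply: uniq_perm; rewrite ?filter_uniq ?divisors_uniq // => x.
    rewrite !mem_filter -!dvdn_divisors //; apply/andP/andP => -[npx xd]; split => //.
      by rewrite -(@Gauss_dvdr _ p) -?gE // coprime_sym prime_coprime.
    by rewrite gE dvdn_mull.
  rewrite (bigID (fun e => p %| e)%N) /= big1 ?add0r; last first.
    move=> e /dvdnP[k ->]; apply: (moebius_sqr_dvd pr_p).
    by rewrite mulnC -mulnA dvdn_mull // -expnSr expn1.
  rewrite big_seq_cond [X in _ + X]big_seq_cond -big_split /= big1 ?gtn_eqF // => e.
  case/andP; rewrite -dvdn_divisors // => eh npe.
  by rewrite moebius_primeM ?addNr // (dvdn_gt0 h_gt0 eh).
by rewrite /divisors /= big_cons big_nil moebius1.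
Qed.

Lemma sum_moebius_dvd n m : (0 < n)%N ->
  \sum_(d <- divisors n | (d %| m)%N) moebius d = (coprime m n)%:Z.
Proof.
move=> n_gt0; have gcd_gt0 : (0 < gcdn m n)%N by rewrite gcdn_gt0 n_gt0 orbT.
rewrite -big_filter (perm_big (divisors (gcdn m n))) ?sum_moebius_divisors //.
apply: uniq_perm; rewrite ?filter_uniq ?divisors_uniq // => x.
by rewrite mem_filter -!dvdn_divisors // dvdn_gcd andbC.
Qed.

Lemma sum_moebius_neq1 (R : pzRingType) n : (1 < n)%N ->
  \sum_(d <- divisors n | d != 1%N) ((moebius d)%:~R : R) = -1.
Proof.
move=> n_gt1; have := sum_moebius_divisors (ltnW n_gt1).
rewrite (bigD1_seq 1%N) ?divisor1 ?divisors_uniq //= moebius1 gtn_eqF // => /eqP.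
by rewrite addrC addr_eq0 => /eqP sumE; rewrite -mulrz_sumr sumE.
Qed.

Lemma coprime_ndvd n m d : coprime m n -> (d %| n)%N -> d != 1%N -> ~~ (d %| m)%N.
Proof.
move=> cop dn d_neq1; apply/negP => dm.
have : (d %| gcdn m n)%N by rewrite dvdn_gcd dm dn.
by rewrite (eqP cop) dvdn1 (negbTE d_neq1).
Qed.

Lemma coprime_subl n m : (m <= n)%N -> coprime (n - m) n = coprime m n.
Proof.
move=> le_mn; rewrite /coprime.
have -> : gcdn (n - m) n = gcdn (n - m) m by rewrite -{2}(subnK le_mn) gcdnDl.
by rewrite gcdnC -{2}(subnKC le_mn) gcdnDl.
Qed.

Lemma U_index_iota n : U n = [seq m <- index_iota 1 n | coprime m n].
Proof. by rewrite /U /index_iota subn1. Qed.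

Lemma totient_big n : (1 < n)%N ->
  totient n = (\sum_(1 <= m < n | coprime m n) 1)%N.
Proof.
move=> n_gt1; have n0_coprime : coprime n 0 = false by rewrite /coprime gcdn0 gtn_eqF.
rewrite totient_count_coprime big_ltn ?(ltnW n_gt1) // n0_coprime add0n [RHS]big_mkcond.
by apply: eq_bigr => m _; rewrite coprime_sym; case: coprime.
Qed.

Lemma natr_divE m d : (0 < d)%N ->
  (m%:R / d%:R : rat) = (m %/ d)%:R + (m %% d)%:R / d%:R.
Proof.
move=> d_gt0; rewrite {1}(divn_eq m d) natrD natrM mulrDl mulfK //.
by rewrite pnatr_eq0 -lt0n.
Qed.

Lemma floor_natr_div m d : (0 < d)%N -> Num.floor (m%:R / d%:R : rat) = (m %/ d)%:Z.
Proof.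
move=> d_gt0; apply: floor_def; rewrite natr_divE // intrD -!pmulrn.
rewrite lerDl divr_ge0 ?ler0n //= ltrD2l ltr_pdivrMr ?ltr0n // mul1r ltr_nat.
by rewrite ltn_pmod.
Qed.

Lemma frac_natr_div m d : (0 < d)%N -> Defs.frac (m%:R / d%:R) = (m %% d)%:R / d%:R.
Proof.
by move=> d_gt0; rewrite /Defs.frac floor_natr_div // natr_divE // -pmulrn addrAC subrr add0r.
Qed.

Lemma natr_div_int m d : (0 < d)%N -> ((m%:R / d%:R : rat) \is a Num.int) = (d %| m)%N.
Proof.
move=> d_gt0; rewrite intrEfloor floor_natr_div // natr_divE // -pmulrn.
rewrite eq_sym -subr_eq0 addrC addKr mulf_eq0 invr_eq0 !pnatr_eq0 (gtn_eqF d_gt0).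
by rewrite orbF.
Qed.

Lemma saw_natr_div m d : (0 < d)%N ->
  saw (m%:R / d%:R) = if (d %| m)%N then 0 else Defs.frac (m%:R / d%:R) - 1 / 2.
Proof. by move=> d_gt0; rewrite /saw natr_div_int. Qed.

Lemma frac_natr_div_compl n m d : (0 < d)%N -> (d %| n)%N -> ~~ (d %| m)%N ->
  (m <= n)%N -> Defs.frac (m%:R / d%:R) + Defs.frac ((n - m)%:R / d%:R) = 1.
Proof.
move=> d_gt0 dn ndm le_mn; rewrite !frac_natr_div // -mulrDl -natrD.
suff -> : (m %% d + (n - m) %% d)%N = d by rewrite divff // pnatr_eq0 gtn_eqF.
have /dvdnP[k kE] : (d %| m %% d + (n - m) %% d)%N by rewrite /dvdn modnDm subnKC.
have : (0 < m %% d)%N by rewrite lt0n.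
have := ltn_pmod m d_gt0; have := ltn_pmod (n - m) d_gt0.
move: (m %% d)%N ((n - m) %% d)%N kE => a b kE lt_bd lt_ad a_gt0.
have : (0 * d < k * d < 2 * d)%N by lia.
by rewrite kE !ltn_pmul2r //; case: k {kE} => [|[|]] // _; rewrite mul1n.
Qed.

Section Nu.

Variables (n : nat).
Hypothesis n_gt1 : (1 < n)%N.

Let n_gt0 : (0 < n)%N := ltnW n_gt1.

Lemma nu_add_compl m : (m < n)%N -> coprime m n -> nu n m%:R + nu n (n - m)%:R = -1.
Proof.
move=> lt_mn cop; rewrite /nu -big_split /= (bigD1_seq 1%N) ?divisor1 ?divisors_uniq //=.
rewrite !frac_natr_div // !modn1 mul0r addr0 mulr0 add0r -(sum_moebius_neq1 _ n_gt1).
rewrite big_seq_cond [RHS]big_seq_cond; apply: eq_bigr => d /andP[].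
rewrite -dvdn_divisors // => dn d_neq1.
rewrite -mulrDr frac_natr_div_compl ?mulr1 ?(dvdn_gt0 n_gt0) //.
  exact: coprime_ndvd cop dn d_neq1.
exact: ltnW.
Qed.

Lemma sum_moebius_saw m : coprime m n ->
  \sum_(d <- divisors n) (moebius d)%:~R * saw (m%:R / d%:R) = nu n m%:R + 1 / 2.
Proof.
move=> cop; rewrite /nu !(bigD1_seq 1%N) ?divisor1 ?divisors_uniq //=.
rewrite saw_natr_div // dvd1n frac_natr_div // modn1 !mul0r mulr0 !add0r.
have -> : 1 / 2 = \sum_(d <- divisors n | d != 1%N) (moebius d)%:~R * - (1 / 2 : rat).
  by rewrite -mulr_suml sum_moebius_neq1 // mulrNN mul1r.
rewrite -big_split /= big_seq_cond [RHS]big_seq_cond.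
apply: eq_bigr => d /andP[]; rewrite -dvdn_divisors // => dn d_neq1.
by rewrite saw_natr_div ?(dvdn_gt0 n_gt0) // (negbTE (coprime_ndvd cop dn d_neq1)); ring.
Qed.

Lemma big_coprime_rev (R : zmodType) (F : nat -> R) :
  \sum_(1 <= m < n | coprime m n) F m = \sum_(1 <= m < n | coprime m n) F (n - m)%N.
Proof.
rewrite big_nat_rev /= big_nat_cond [RHS]big_nat_cond.
apply: eq_big => [m|m _]; rewrite add1n subSS //.
case: (boolP (1 <= m < n)%N) => //= /andP[m_ge1 lt_mn].
by rewrite coprime_subl // ltnW.
Qed.

Lemma sum_coprime_nu :
  \sum_(1 <= m < n | coprime m n) (n%:R - m%:R + n%:R * nu n m%:R) = 0.
Proof.
(* Pair [m] with [n - m]: the two summands add up to [n (1 + nu(m) + nu(n - m)) = 0]. *)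
set S := (X in X = 0); suff : S + S = 0 by lra.
rewrite {2}/S big_coprime_rev -big_split big_nat_cond big1 // => m.
case/andP => /andP[_ lt_mn] cop.
move: (nu n m%:R) (nu n (n - m)%:R) (nu_add_compl lt_mn cop) => a b abE.
by rewrite /= natrB ?(ltnW lt_mn) // (_ : b = -1 - a); [ring | lra].
Qed.

End Nu.

Lemma big_nat_dvd (R : zmodType) (F : nat -> R) d N : (0 < d)%N ->
  \sum_(1 <= m < N.+1 | (d %| m)%N) F m = \sum_(1 <= k < (N %/ d).+1) F (k * d)%N.
Proof.
move=> d_gt0; elim: N => [|N IH]; first by rewrite div0n !big_geq.
rewrite big_mkcond big_nat_recr //= -big_mkcond IH divnS //.
case: ifP => dN /=; last by rewrite add0n addr0.
rewrite add1n [in RHS]big_nat_recr //=; congr (_ + F _).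
by have := divnS N d_gt0; rewrite dN add1n => <-; rewrite divnK.
Qed.

Lemma dedekind_sum_dvd n d1 d2 : (0 < n)%N -> (d1 %| n)%N -> (d2 %| n)%N ->
  dedekind_sum (n %/ d1) (n %/ d2) =
  \sum_(1 <= m < n.+1 | (d2 %| m)%N) saw (m%:R / d1%:R) * saw (m%:R / n%:R).
Proof.
move=> n_gt0 d1n d2n; have d1_gt0 := dvdn_gt0 n_gt0 d1n.
have d2_gt0 := dvdn_gt0 n_gt0 d2n.
rewrite big_nat_dvd // /dedekind_sum; apply: eq_bigr => k _.
have d1_neq0 : (d1%:R : rat) != 0 by rewrite pnatr_eq0 gtn_eqF.
have d2_neq0 : (d2%:R : rat) != 0 by rewrite pnatr_eq0 gtn_eqF.
have n_neq0 : (n%:R : rat) != 0 by rewrite pnatr_eq0 gtn_eqF.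
rewrite !natrM !natr_div ?unitfE //.
by congr (saw _ * saw _); field; rewrite ?n_neq0 ?d1_neq0 ?d2_neq0.
Qed.

Lemma sum_moebius2_dvd (R : comPzRingType) n (G : nat -> nat -> R) : (0 < n)%N ->
  \sum_(d1 <- divisors n) \sum_(d2 <- divisors n)
     (moebius d1)%:~R * (moebius d2)%:~R * \sum_(1 <= m < n.+1 | (d2 %| m)%N) G d1 m
  = \sum_(1 <= m < n.+1 | coprime m n) \sum_(d1 <- divisors n) (moebius d1)%:~R * G d1 m.
Proof.
move=> n_gt0; rewrite [RHS]exchange_big /=; apply: eq_bigr => d1 _.
under eq_bigr do rewrite mulr_sumr big_mkcond.
rewrite exchange_big /= [RHS]big_mkcond; apply: eq_bigr => m _.
rewrite -big_mkcond /=.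
under eq_bigr do rewrite mulrAC -[_ * _ * _]mulrC.
rewrite -mulr_suml -mulrz_sumr sum_moebius_dvd //.
by case: (coprime m n); rewrite ?mul1r ?mul0r.
Qed.

Lemma moebius2_dedekind_sum n : (1 < n)%N ->
  \sum_(d1 <- divisors n) \sum_(d2 <- divisors n)
     (moebius d1)%:~R * (moebius d2)%:~R * dedekind_sum (n %/ d1) (n %/ d2)
  = \sum_(1 <= m < n | coprime m n) (nu n m%:R + 1 / 2) * (m%:R / n%:R - 1 / 2).
Proof.
move=> n_gt1; have n_gt0 := ltnW n_gt1.
transitivity (\sum_(d1 <- divisors n) \sum_(d2 <- divisors n)
    (moebius d1)%:~R * (moebius d2)%:~R * \sum_(1 <= m < n.+1 | (d2 %| m)%N)
      (saw (m%:R / d1%:R) * saw (m%:R / n%:R))).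
  rewrite big_seq [RHS]big_seq; apply: eq_bigr => d1 d1n.
  rewrite big_seq [RHS]big_seq; apply: eq_bigr => d2 d2n.
  by rewrite dedekind_sum_dvd // dvdn_divisors.
have nn_coprime : coprime n n = false by rewrite /coprime gcdnn gtn_eqF.
rewrite sum_moebius2_dvd // big_mkcond big_nat_recr //= nn_coprime addr0 -big_mkcond.
rewrite big_nat_cond [RHS]big_nat_cond; apply: eq_bigr => m /andP[/andP[_ lt_mn] cop].
rewrite -(sum_moebius_saw n_gt1 cop) mulr_suml.
have -> : saw (m%:R / n%:R) = m%:R / n%:R - 1 / 2.
  rewrite saw_natr_div // (negbTE (coprime_ndvd cop (dvdnn n) _)) ?(gtn_eqF n_gt1) //.
  by rewrite frac_natr_div // modn_small.
by apply: eq_bigr => d _; rewrite mulrA.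
Qed.

Theorem mainTheorem10 (n : nat) (hn : (1 < n)%N) :
  \sum_(a <- U n) nu n a%:R * a%:R =
    - (n%:R * (totient n)%:R / 4) +
    n%:R * \sum_(d1 <- divisors n) \sum_(d2 <- divisors n)
             (moebius d1)%:~R * (moebius d2)%:~R
             * dedekind_sum (n %/ d1) (n %/ d2).
Proof.
have n_neq0 : (n%:R : rat) != 0 by rewrite pnatr_eq0 gtn_eqF // ltnW.
rewrite U_index_iota big_filter moebius2_dedekind_sum // totient_big // natr_sum.
apply/eqP; rewrite -subr_eq0 mulr_sumr mulr_suml -sumrN mulr_sumr -big_split /= -sumrB.
rewrite (eq_bigr (fun m => 1 / 2 * (n%:R - m%:R + n%:R * nu n m%:R))).
  by rewrite -mulr_sumr sum_coprime_nu // mulr0.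
by move=> m _; field.
Qed.
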